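(* Let $\tau>0$ and let $\tilde N^E_3,\tilde N^A_3\in\mathbb{C}^{n_3,n_3}$ be nilpotent matrices that commute. Consider the equation $\tilde N^E_3\dot x_3(t)=\tilde N^A_3x_3(t)+x_3(t-\tau)+\tilde f_3(t)$ for $t\in[0,\infty)$, where $\tilde f_3$ is sufficiently smooth. Then this equation has the unique solution $$x_3(t)=-\sum_{i=0}^{n_3-1}\left(\tilde N^E_3\tfrac{d}{dt}-\tilde N^A_3\right)^i\tilde f_3\big(t+(i+1)\tau\big)\quad\text{for all }t\in[-\tau,\infty).$$ *)

From HB Require Import structures.
From mathcomp Require Import all_boot all_order all_algebra.
From mathcomp Require Import all_classical all_reals all_analysis.
From mathcomp Require Import complex.

Set Implicit Arguments.
Unset Strict Implicit.
Unset Printing Implicit Defensive.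

Import Order.TTheory GRing.Theory Num.Theory.
Import numFieldNormedType.Exports.
Local Open Scope ring_scope.
Local Open Scope classical_set_scope.


Definition mx_nilpotent (R : realType) (n : nat) (A : 'M[R[i]]_n) : Prop := exists k : nat, A ^+ k = 0.

Definition cderivable (R : realType) (n : nat) (g : R -> 'cV[R[i]]_n) (t : R) : Prop :=
  forall (i : 'I_n) (j : 'I_1),
    derivable (fun s : R => complex.Re (g s i j)) t 1 /\
    derivable (fun s : R => complex.Im (g s i j)) t 1.

Definition cderive (R : realType) (n : nat) (g : R -> 'cV[R[i]]_n) : R -> 'cV[R[i]]_n :=
  fun t => \matrix_(i < n, j < 1)
    Complex ((fun s : R => complex.Re (g s i j))^`() t) ((fun s : R => complex.Im (g s i j))^`() t).

(* "Sufficiently smooth": infinitely differentiable on R. *)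
Definition csmooth (R : realType) (n : nat) (g : R -> 'cV[R[i]]_n) : Prop :=
  forall (k : nat) (t : R), cderivable (iter k (@cderive R n) g) t.

Definition Dop (R : realType) (n : nat) (NE NA : 'M[R[i]]_n) (g : R -> 'cV[R[i]]_n) :
  R -> 'cV[R[i]]_n :=
  fun t => NE *m cderive g t - NA *m g t.

(* d is the derivative of y at t, taken within the half line [0, oo)
   (i.e. one-sided at t = 0), componentwise on real and imaginary parts. *)
Definition has_hderiv (R : realType) (n : nat) (y : R -> 'cV[R[i]]_n) (t : R)
  (d : 'cV[R[i]]_n) : Prop :=
  forall (i : 'I_n) (j : 'I_1),
    ((fun h : R => h^-1 * (complex.Re (y (t + h) i j) - complex.Re (y t i j)))
        @ within (fun h : R => 0 <= t + h) ((0 : R)^')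
      --> complex.Re (d i j)) /\
    ((fun h : R => h^-1 * (complex.Im (y (t + h) i j) - complex.Im (y t i j)))
        @ within (fun h : R => 0 <= t + h) ((0 : R)^')
      --> complex.Im (d i j)).

Definition is_solution (R : realType) (n : nat) (NE NA : 'M[R[i]]_n) (tau : R)
  (f y : R -> 'cV[R[i]]_n) : Prop :=
  forall t : R, 0 <= t ->
    exists d : 'cV[R[i]]_n, has_hderiv y t d /\
      NE *m d = NA *m y t + y (t - tau) + f t.

From mathcomp Require Import all_boot all_order all_algebra.
From mathcomp Require Import all_classical all_reals all_analysis.
From mathcomp Require Import complex.
From mathcomp Require Import zify.

(* Since N^E and N^A commute and are nilpotent, every monomial (N^E)^a (N^A)^b
   with a + b >= n vanishes.  Call a vector k-annihilated if all monomials of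
   degree >= n - k kill it.  Applying D = N^E d/dt - N^A raises the index by one
   (a derivative of a k-annihilated function is k-annihilated), so D^k f is
   k-annihilated and D^n f = 0.  The sum defining x then telescopes, which gives
   N^E x' - N^A x = x(. - tau) + f.  Conversely, the difference z of two
   solutions satisfies z(t) = N^E z'(t + tau) - N^A z(t + tau); by the same
   count, induction on k shows that z is k-annihilated on [-tau, oo), hence 0. *)

Set Implicit Arguments.
Unset Strict Implicit.
Unset Printing Implicit Defensive.
Import Order.TTheory GRing.Theory Num.Theory.
Import numFieldNormedType.Exports.
Local Open Scope ring_scope.
Local Open Scope classical_set_scope.

Lemma mx_nilpotent_size (F : fieldType) (n : nat) (A : 'M[F]_n) k :
  A ^+ k = 0 -> A ^+ n = 0.
Proof.
case: n A => [|n] A Ak; first by rewrite [LHS]flatmx0 [RHS]flatmx0.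
have : mxminpoly A %| ('X - 0%:P) ^+ k.
  by apply/mxminpoly_minP; rewrite subr0 rmorphXn /= horner_mx_X.
case/dvdp_exp_XsubCP => j le_jk minpolyE.
have Aj : A ^+ j = 0.
  have : horner_mx A (('X - 0%:P) ^+ j) = 0.
    by apply/mxminpoly_minP; rewrite (eqp_dvdl _ minpolyE) dvdpp.
  by rewrite subr0 rmorphXn /= horner_mx_X.
have le_jn : (j <= n.+1)%N.
  have := dvdp_leq (monic_neq0 (char_poly_monic A)) (mxminpoly_dvd_char A).
  by rewrite (eqp_size minpolyE) size_char_poly subr0 size_polyXn.
by rewrite -[in X in A ^+ X](subnK le_jn) exprD Aj mulr0.
Qed.

Lemma exprZmx (R : comPzRingType) (n : nat) (s : R) (A : 'M[R]_n) k :
  (s *: A) ^+ k = s ^+ k *: A ^+ k.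
Proof.
elim: k => [|k IHk]; first by rewrite !expr0 scale1r.
by rewrite !exprS IHk -!mulmxE -scalemxAl -scalemxAr scalerA.
Qed.

Section CommutingNilpotent.
Variables (C : numFieldType) (n : nat) (NE NA : 'M[C]_n).
Hypotheses (nilE : exists k, NE ^+ k = 0) (nilA : exists k, NA ^+ k = 0).
Hypothesis commEA : GRing.comm NE NA.

Let commZEA (s : C) : GRing.comm (s *: NE) NA.
Proof. by rewrite /GRing.comm -!mulmxE -scalemxAl -scalemxAr !mulmxE commEA. Qed.

Let commXEA a b : GRing.comm (NE ^+ a) (NA ^+ b).
Proof. exact/commr_sym/commrX/commr_sym/commrX. Qed.

Lemma scaleD_nilpotent (s : C) : exists k, (s *: NE + NA) ^+ k = 0.
Proof.
have [p Ep] := nilE; have [q Aq] := nilA; exists (p + q)%N.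
rewrite exprDn_comm // big1 // => i _; have [le_qi | lt_iq] := leqP q i.
  by rewrite -(subnK le_qi) exprD Aq !mulr0 mul0rn.
have le_p : (p <= p + q - i)%N by lia.
by rewrite exprZmx -(subnK le_p) !exprD Ep mulr0 scaler0 mul0r mul0rn.
Qed.

(* The entries of [(s NE + NA)^n = 0] are polynomials of degree at most [n]
   in [s] vanishing at [0, ..., n]; their coefficients are the monomials. *)
Lemma monomial_size_eq0 i : (i <= n)%N -> NE ^+ i * NA ^+ (n - i) = 0.
Proof.
move=> le_in.
have sum_eq0 (s : C) :
    \sum_(j < n.+1) s ^+ j *: (NE ^+ j * NA ^+ (n - j) *+ 'C(n, j)) = 0.
  have [k Ek] := scaleD_nilpotent s.
  rewrite -[RHS](mx_nilpotent_size Ek) addrC exprDn_comm; last exact/commr_sym.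
  apply: eq_bigr => j _.
  by rewrite exprZmx -mulmxE -scalemxAr mulmxE scalerMnr commXEA.
apply/matrixP => a b; rewrite [RHS]mxE.
pose p := \poly_(j < n.+1) ((NE ^+ j * NA ^+ (n - j)) a b *+ 'C(n, j)).
suff p0 : p = 0.
  have /eqP := congr1 (fun q : {poly C} => q`_i) p0.
  by rewrite coef_poly ltnS le_in coef0 mulrn_eq0 eqn0Ngt bin_gt0 le_in => /eqP.
apply: (@roots_geq_poly_eq0 _ p [seq (m%:R : C) | m <- iota 0 n.+1]).
- apply/allP => x /mapP [m _ ->]; apply/rootP.
  have /matrixP/(_ a b) := sum_eq0 m%:R; rewrite summxE mxE => <-.
  rewrite horner_poly; apply: eq_bigr => j _.
  by rewrite [in RHS]mxE mulrC; congr (_ * _); rewrite -mulmxnE.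
- by rewrite map_inj_uniq ?iota_uniq // => x y /eqP; rewrite eqr_nat => /eqP.
- by rewrite size_map size_iota size_poly.
Qed.

Lemma monomial_eq0 a b : (n <= a + b)%N -> NE ^+ a * NA ^+ b = 0.
Proof.
move=> le_n_ab; set i := minn a n.
have [le_in le_ia le_b] : [/\ i <= n, i <= a & n - i <= b]%N by split; rewrite /i; lia.
rewrite -(subnK le_ia) -(subnKC le_b) !exprD -mulrA (mulrA (NE ^+ i)).
by rewrite monomial_size_eq0 // mul0r mulr0.
Qed.

Definition annihilated k (v : 'cV[C]_n) :=
  forall a b, (n <= a + b + k)%N -> NE ^+ a * NA ^+ b *m v = 0.

Lemma annihilated0 v : annihilated 0 v.
Proof. by move=> a b; rewrite addn0 => /monomial_eq0 ->; rewrite mul0mx. Qed.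

Lemma annihilated_size v : annihilated n v -> v = 0.
Proof. by move/(_ 0 0)%N; rewrite !expr0 mulr1 mul1mx; apply. Qed.

Lemma annihilatedS k d v : annihilated k d -> annihilated k v ->
  annihilated k.+1 (NE *m d - NA *m v).
Proof.
move=> kd kv a b le_n; rewrite mulmxBr !mulmxA !mulmxE -mulrA -(commrX b commEA).
rewrite mulrA -exprSr -mulrA -exprSr -!mulmxE kd ?kv ?subr0 //; lia.
Qed.
End CommutingNilpotent.

Section ComplexLimits.
Variables (R : realType) (F : set_system R).
Context {FF : Filter F}.
Implicit Types (phi psi : R -> R[i]) (l : R[i]).
Local Notation Re := (@complex.Re R).
Local Notation Im := (@complex.Im R).
(* [Re] and [Im] are R-linear on [Rcomplex R], the R-vector space view of [R[i]]. *)
Local Notation ReC := (Re : Rcomplex R -> R).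
Local Notation ImC := (Im : Rcomplex R -> R).

Definition cvgReIm phi l :=
  (fun h => Re (phi h)) @ F --> Re l /\ (fun h => Im (phi h)) @ F --> Im l.

Lemma cvgReIm_cst l : cvgReIm (fun _ => l) l.
Proof. by split; apply: cvg_cst. Qed.

Lemma cvgReImD phi psi l l' : cvgReIm phi l -> cvgReIm psi l' ->
  cvgReIm (fun h => phi h + psi h) (l + l').
Proof.
move=> [Re_phi Im_phi] [Re_psi Im_psi]; split.
  by rewrite (raddfD ReC); under eq_fun do rewrite (raddfD ReC); apply: cvgD.
by rewrite (raddfD ImC); under eq_fun do rewrite (raddfD ImC); apply: cvgD.
Qed.

Lemma cvgReImN phi l : cvgReIm phi l -> cvgReIm (fun h => - phi h) (- l).
Proof.
move=> [Re_phi Im_phi]; split.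
  by rewrite (raddfN ReC); under eq_fun do rewrite (raddfN ReC); apply: cvgN.
by rewrite (raddfN ImC); under eq_fun do rewrite (raddfN ImC); apply: cvgN.
Qed.

Lemma cvgReImMr c phi l : cvgReIm phi l -> cvgReIm (fun h => c * phi h) (c * l).
Proof.
have ReM (x y : R[i]) : Re (x * y) = Re x * Re y - Im x * Im y.
  by case: x y => ? ? [].
have ImM (x y : R[i]) : Im (x * y) = Re x * Im y + Im x * Re y.
  by case: x y => ? ? [].
move=> [Re_phi Im_phi]; split.
  by rewrite ReM; under eq_fun do rewrite ReM; apply: cvgB; apply: cvgMr.
by rewrite ImM; under eq_fun do rewrite ImM; apply: cvgD; apply: cvgMr.
Qed.

Lemma cvgReIm_sum (I : Type) (r : seq I) (phi : I -> R -> R[i]) (l : I -> R[i]) :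
  (forall k, cvgReIm (phi k) (l k)) ->
  cvgReIm (fun h => \sum_(k <- r) phi k h) (\sum_(k <- r) l k).
Proof.
move=> phi_l; elim: r => [|k r IHr].
  by rewrite big_nil; under eq_fun do rewrite big_nil; apply: cvgReIm_cst.
by rewrite big_cons; under eq_fun do rewrite big_cons; apply: cvgReImD.
Qed.

End ComplexLimits.

Section RealDifferenceQuotient.
Variable R : realType.
Implicit Types (phi : R -> R) (t l : R).

Let quotE phi t : (fun h => h^-1 * (phi (t + h) - phi t)) =
  (fun h => h^-1 *: ((phi \o shift t) (h *: 1) - phi t)).
Proof. by apply: funext => h; rewrite -[h%:A]/(h * 1) mulr1 /= (addrC h). Qed.

Lemma derivable1_quot_cvg phi t : derivable phi t 1 ->
  (fun h => h^-1 * (phi (t + h) - phi t)) @ 0^' --> phi^`() t.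
Proof. by rewrite derive1E quotE; apply. Qed.

Lemma quot_cvg_derivable1 phi t l :
  (fun h => h^-1 * (phi (t + h) - phi t)) @ 0^' --> l ->
  derivable phi t 1 /\ phi^`() t = l.
Proof.
rewrite quotE => quot_l; split; first by apply/cvg_ex; exists l.
by rewrite derive1E; apply: cvg_lim.
Qed.

End RealDifferenceQuotient.

Section DifferenceQuotient.
Variables (R : realType) (n : nat).
Implicit Types (g : R -> 'cV[R[i]]_n) (t : R) (d : 'cV[R[i]]_n).
Local Notation Re := (@complex.Re R).
Local Notation Im := (@complex.Im R).

Definition diffquot g t i j h : R[i] :=
  real_complex R h^-1 * (g (t + h) i j - g t i j).

Definition diffquot_cvg (F : set_system R) g t d :=
  forall i j, cvgReIm F (diffquot g t i j) (d i j).

Lemma Re_diffquot g t i j h :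
  Re (diffquot g t i j h) = h^-1 * (Re (g (t + h) i j) - Re (g t i j)).
Proof.
by rewrite /diffquot; case: (g _ i j) (g t i j) => [? ?] [? ?]; rewrite /= mul0r subr0.
Qed.

Lemma Im_diffquot g t i j h :
  Im (diffquot g t i j h) = h^-1 * (Im (g (t + h) i j) - Im (g t i j)).
Proof.
by rewrite /diffquot; case: (g _ i j) (g t i j) => [? ?] [? ?]; rewrite /= mul0r addr0.
Qed.

Lemma has_hderivE g t d :
  has_hderiv g t d <-> diffquot_cvg (within (fun h => 0 <= t + h) 0^') g t d.
Proof.
split=> g_d i j; have [Re_d Im_d] := g_d i j; split.
- by under eq_fun do rewrite Re_diffquot.
- by under eq_fun do rewrite Im_diffquot.
- by move: Re_d; under eq_fun do rewrite Re_diffquot.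
- by move: Im_d; under eq_fun do rewrite Im_diffquot.
Qed.

Lemma cderivable_diffquot_cvg g t :
  cderivable g t -> diffquot_cvg 0^' g t (cderive g t).
Proof.
move=> dg i j; have [dRe dIm] := dg i j; rewrite mxE; split.
  by under eq_fun do rewrite Re_diffquot; apply: derivable1_quot_cvg.
by under eq_fun do rewrite Im_diffquot; apply: derivable1_quot_cvg.
Qed.

Lemma diffquot_cvg_cderive g t d :
  diffquot_cvg 0^' g t d -> cderivable g t /\ cderive g t = d.
Proof.
move=> g_d.
have ReIm_d i j :
    [/\ derivable (fun s => Re (g s i j)) t 1,
        (fun s => Re (g s i j))^`() t = Re (d i j),
        derivable (fun s => Im (g s i j)) t 1 &
        (fun s => Im (g s i j))^`() t = Im (d i j)].
  have [Re_d Im_d] := g_d i j.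
  move: Re_d; under eq_fun do rewrite Re_diffquot.
  case/(@quot_cvg_derivable1 _ (fun s => Re (g s i j))) => ? ?.
  move: Im_d; under eq_fun do rewrite Im_diffquot.
  by case/(@quot_cvg_derivable1 _ (fun s => Im (g s i j))).
split=> [i j|]; first by have [? _ ? _] := ReIm_d i j.
apply/matrixP => i j; have [_ ReE _ ImE] := ReIm_d i j.
by rewrite mxE ReE ImE; case: (d i j).
Qed.

Section AlongFilter.
Variable F : set_system R.
Context {FF : Filter F}.

Lemma diffquot_cvg_mulmx (M : 'M[R[i]]_n) g t d : diffquot_cvg F g t d ->
  diffquot_cvg F (fun s => M *m g s) t (M *m d).
Proof.
move=> g_d i j; rewrite mxE.
have -> : diffquot (fun s => M *m g s) t i j =
          (fun h => \sum_k M i k * diffquot g t k j h).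
  apply: funext => h; rewrite /diffquot !mxE -sumrB mulr_sumr.
  by apply: eq_bigr => k _; rewrite -mulrBr mulrCA.
by apply: cvgReIm_sum => k; apply: cvgReImMr.
Qed.

Lemma diffquot_cvgD g1 g2 t d1 d2 :
  diffquot_cvg F g1 t d1 -> diffquot_cvg F g2 t d2 ->
  diffquot_cvg F (fun s => g1 s + g2 s) t (d1 + d2).
Proof.
move=> g1_d1 g2_d2 i j; rewrite mxE.
have -> : diffquot (fun s => g1 s + g2 s) t i j =
          (fun h => diffquot g1 t i j h + diffquot g2 t i j h).
  by apply: funext => h; rewrite /diffquot !mxE -mulrDr opprD addrACA.
exact: cvgReImD.
Qed.

Lemma diffquot_cvgN g t d : diffquot_cvg F g t d ->
  diffquot_cvg F (fun s => - g s) t (- d).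
Proof.
move=> g_d i j; rewrite mxE.
have -> : diffquot (fun s => - g s) t i j = (fun h => - diffquot g t i j h).
  by apply: funext => h; rewrite /diffquot !mxE -opprD mulrN.
exact: cvgReImN.
Qed.

Lemma diffquot_cvg_sum (I : Type) (r : seq I) (G : I -> R -> 'cV[R[i]]_n) t
    (D : I -> 'cV[R[i]]_n) :
  (forall k, diffquot_cvg F (G k) t (D k)) ->
  diffquot_cvg F (fun s => \sum_(k <- r) G k s) t (\sum_(k <- r) D k).
Proof.
move=> G_D i j; rewrite summxE.
have -> : diffquot (fun s => \sum_(k <- r) G k s) t i j =
          (fun h => \sum_(k <- r) diffquot (G k) t i j h).
  by apply: funext => h; rewrite /diffquot !summxE -sumrB mulr_sumr.
by apply: cvgReIm_sum => k; apply: G_D.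
Qed.

Lemma diffquot_cvg_shift g t c d : diffquot_cvg F g (t + c) d ->
  diffquot_cvg F (fun s => g (s + c)) t d.
Proof.
by move=> g_d i j; rewrite /diffquot; under eq_fun do rewrite addrAC; apply: g_d.
Qed.

Lemma diffquot_cvg_filterS (G : set_system R) g t d :
  G --> F -> diffquot_cvg F g t d -> diffquot_cvg G g t d.
Proof.
move=> GF g_d i j; have [? ?] := g_d i j.
by split; apply: cvg_trans (cvg_app _ GF) _.
Qed.

End AlongFilter.

Lemma diffquot_cvg_eq0 (F : set_system R) {PF : ProperFilter F} g t d :
  diffquot_cvg F g t d -> g t = 0 -> (\forall h \near F, g (t + h) = 0) -> d = 0.
Proof.
move=> g_d gt0 g0; apply/matrixP => i j; rewrite mxE.
have quot0 : \forall h \near F, diffquot g t i j h = 0.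
  by apply: filterS g0 => h gh0; rewrite /diffquot gh0 gt0 mxE subrr mulr0.
have [Re_d Im_d] := g_d i j.
have cvg0 (phi : R[i] -> R) : (fun h => phi (diffquot g t i j h)) @ F --> phi 0.
  by apply: cvg_near_cst; apply: filterS quot0 => h ->.
case: (d i j) Re_d Im_d => a b /= Re_a Im_b.
have R_hausdorff := @norm_hausdorff R R^o.
by rewrite (cvg_unique R_hausdorff Re_a (cvg0 _)) (cvg_unique R_hausdorff Im_b (cvg0 _)).
Qed.

End DifferenceQuotient.

Section DelayOperator.
Variables (R : realType) (n : nat) (NE NA : 'M[R[i]]_n).
Implicit Types (g : R -> 'cV[R[i]]_n) (t : R).

Lemma cderive_Dop g t : cderivable g t -> cderivable (cderive g) t ->
  cderivable (Dop NE NA g) t /\ cderive (Dop NE NA g) t = Dop NE NA (cderive g) t.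
Proof.
move=> /cderivable_diffquot_cvg dg /cderivable_diffquot_cvg ddg.
apply: diffquot_cvg_cderive; apply: diffquot_cvgD; first exact: diffquot_cvg_mulmx.
exact/diffquot_cvgN/diffquot_cvg_mulmx.
Qed.

Lemma csmooth_Dop g : csmooth g -> csmooth (Dop NE NA g).
Proof.
move=> sg; have dDop k t := cderive_Dop (sg k t) (sg k.+1 t).
have iter_cderive_Dop k :
    iter k (@cderive R n) (Dop NE NA g) = Dop NE NA (iter k (@cderive R n) g).
  by elim: k => [//|k IHk]; rewrite iterS IHk; apply: funext => t; case: (dDop k t).
by move=> k t; rewrite iter_cderive_Dop; case: (dDop k t).
Qed.

Lemma csmooth_iter_Dop k g : csmooth g -> csmooth (iter k (Dop NE NA) g).
Proof. by move=> sg; elim: k => // k; apply: csmooth_Dop. Qed.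

Lemma cderive_mulmx_eq0 (M : 'M[R[i]]_n) g t : cderivable g t ->
  (forall s, M *m g s = 0) -> M *m cderive g t = 0.
Proof.
move=> /cderivable_diffquot_cvg/(diffquot_cvg_mulmx M) dMg Mg0.
by apply: diffquot_cvg_eq0 dMg _ _; [apply: Mg0 | apply: nearW => h; apply: Mg0].
Qed.

Lemma has_hderiv_mulmx_eq0 (M : 'M[R[i]]_n) g t d :
  0 <= t -> has_hderiv g t d -> (forall s, t <= s -> M *m g s = 0) ->
  M *m d = 0.
Proof.
move=> t_ge0 /has_hderivE/(diffquot_cvg_mulmx M) dMg Mg0.
have right_within : 0^'+ --> within (fun h => 0 <= t + h) 0^'.
  have right_dnbhs : 0^'+ --> (0 : R)^' by apply: within_subset => h /lt0r_neq0.
  move=> P; rewrite !nbhs_simpl => /right_dnbhs near_P.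
  apply: filterS2 near_P (nbhs_right_gt 0) => h Ph h_gt0.
  by apply: Ph; rewrite addr_ge0 // ltW.
apply: diffquot_cvg_eq0 (diffquot_cvg_filterS right_within dMg) _ _.
  exact: Mg0.
by near=> h; apply: Mg0; rewrite lerDl; near: h; apply: nbhs_right_ge.
Unshelve. all: by end_near.
Qed.

End DelayOperator.

Lemma is_solutionB (R : realType) (n : nat) (NE NA : 'M[R[i]]_n) (tau : R)
    (f g y z : R -> 'cV[R[i]]_n) :
  is_solution NE NA tau f y -> is_solution NE NA tau g z ->
  is_solution NE NA tau (fun t => f t - g t) (fun t => y t - z t).
Proof.
move=> sol_y sol_z t t_ge0.
have [dy [y_dy Ey]] := sol_y t t_ge0; have [dz [z_dz Ez]] := sol_z t t_ge0.
exists (dy - dz); split.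
  apply/has_hderivE/diffquot_cvgD; first exact/has_hderivE.
  exact/diffquot_cvgN/has_hderivE.
by rewrite mulmxBr Ey Ez mulmxBr !opprD addrACA (addrACA (NA *m y t)).
Qed.

Section Solution.
Variables (R : realType) (n : nat) (tau : R) (NE NA : 'M[R[i]]_n).
Hypotheses (nilE : mx_nilpotent NE) (nilA : mx_nilpotent NA).
Hypothesis commEA : NE *m NA = NA *m NE.

Let commEA_ring : GRing.comm NE NA. Proof. by rewrite /GRing.comm -!mulmxE. Qed.
Local Notation annihilated := (annihilated NE NA).

Section Existence.
Variable f : R -> 'cV[R[i]]_n.
Hypothesis smooth_f : csmooth f.
Local Notation D k := (iter k (Dop NE NA) f).

Lemma iter_Dop_annihilated k t : annihilated k (D k t).
Proof.
elim: k t => [|k IHk] t; first exact: (annihilated0 nilE nilA commEA_ring).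
apply: (annihilatedS commEA_ring) (IHk t) => a b le_n.
apply: (cderive_mulmx_eq0 (csmooth_iter_Dop NE NA k smooth_f 0 t)) => s.
exact: IHk.
Qed.

Lemma iter_Dop_size t : D n t = 0.
Proof. exact/annihilated_size/iter_Dop_annihilated. Qed.

Definition delay_solution t := - \sum_(i < n) D i (t + i.+1%:R * tau).

Lemma delay_solution_is_solution : is_solution NE NA tau f delay_solution.
Proof.
move=> t _; exists (- \sum_(i < n) cderive (D i) (t + i.+1%:R * tau)); split.
  apply/has_hderivE/(diffquot_cvg_filterS (cvg_within _)).
  apply/diffquot_cvgN/diffquot_cvg_sum => i.
  apply/diffquot_cvg_shift/cderivable_diffquot_cvg.
  exact: (csmooth_iter_Dop NE NA i smooth_f 0).
pose F i := D i (t + i%:R * tau).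
have NE_cderive i s : NE *m cderive (D i) s = D i.+1 s + NA *m D i s.
  by rewrite iterS /Dop subrK.
have shiftE : delay_solution (t - tau) = - \sum_(i < n) F i.
  congr (- _); apply: eq_bigr => i _; rewrite /F mulrSr mulrDl mul1r.
  by rewrite addrCA addrC subrK.
have telescope : F 0%N + \sum_(i < n) F i.+1 = \sum_(i < n) F i + F n.
  by rewrite -(big_ord_recl n F) (big_ord_recr n F).
rewrite mulmxN mulmx_sumr; under eq_bigr do rewrite NE_cderive.
rewrite big_split /= opprD addrC shiftE {1}/delay_solution mulmxN mulmx_sumr -addrA.
congr (_ + _); have F0 : F 0%N = f t by rewrite /F mul0r addr0.
have Fn : F n = 0 := iter_Dop_size _.
have S1E : \sum_(i < n) F i.+1 = \sum_(i < n) F i - f t.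
  by apply: (addrI (F 0%N)); rewrite telescope Fn addr0 F0 addrC subrK.
by rewrite S1E opprB addrC.
Qed.
End Existence.

Hypothesis tau_ge0 : 0 <= tau.

Lemma homogeneous_solution_eq0 z : is_solution NE NA tau (fun=> 0) z ->
  forall t, - tau <= t -> z t = 0.
Proof.
move=> sol_z; suff z_annihilated k t : - tau <= t -> annihilated k (z t).
  by move=> t /(z_annihilated n) /annihilated_size.
elim: k t => [|k IHk] t t_ge; first exact: (annihilated0 nilE nilA commEA_ring).
have s_ge0 : 0 <= t + tau by rewrite -lerBlDr sub0r.
have later s : t + tau <= s -> - tau <= s.
  by move=> /(le_trans s_ge0); apply: le_trans; rewrite oppr_le0.
have [d [z_d Ez]] := sol_z _ s_ge0.
have -> : z t = NE *m d - NA *m z (t + tau) by rewrite Ez addr0 addrK addrC addKr.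
apply: (annihilatedS commEA_ring); last exact/IHk/later.
by move=> a b le_n; apply: (has_hderiv_mulmx_eq0 s_ge0 z_d) => s /later /IHk; apply.
Qed.

End Solution.

Theorem lemma4 (R : realType) (n3 : nat) (tau : R) (NE NA : 'M[R[i]]_n3)
    (f : R -> 'cV[R[i]]_n3) :
  0 < tau -> mx_nilpotent NE -> mx_nilpotent NA -> NE *m NA = NA *m NE ->
  csmooth f ->
  let x := fun t : R =>
    - \sum_(i < n3) iter i (Dop NE NA) f (t + (i.+1)%:R * tau) in
  is_solution NE NA tau f x /\
  (forall y : R -> 'cV[R[i]]_n3, is_solution NE NA tau f y ->
     forall t : R, - tau <= t -> y t = x t).
Proof.
move=> tau_gt0 nilE nilA commEA smooth_f x.
have sol_x : is_solution NE NA tau f x :=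
  delay_solution_is_solution tau nilE nilA commEA smooth_f.
split=> // y sol_y t t_ge; apply/eqP; rewrite -subr_eq0; apply/eqP.
have := is_solutionB sol_y sol_x.
rewrite (_ : (fun t => f t - f t) = fun=> 0); last by apply: funext => s; rewrite subrr.
by move/(homogeneous_solution_eq0 nilE nilA commEA (ltW tau_gt0)); apply.
Qed.
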